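(* Let $M$ be a finite $\Sigma$-Rickart right $R$-module and $P$ a simple right $R$-module with $\mathrm{Hom}_R(M,P)=0$. Then $M^{(\ell)}\oplus P^{(n)}$ is a finite $\Sigma$-Rickart module for all integers $\ell,n>0$.
   Context: $M^{(n)}$ is the direct sum of $n$ copies of $M$. $M$ is Rickart if $\ker\varphi$ is a direct summand of $M$ for all $\varphi\in\mathrm{End}_R(M)$; $M$ is finite $\Sigma$-Rickart if $M^{(n)}$ is Rickart for all $n>0$. *)

From HB Require Import structures.
From mathcomp Require Import all_boot all_algebra.
Set Implicit Arguments. Unset Strict Implicit. Unset Printing Implicit Defensive.
Import GRing.Theory.
Local Open Scope ring_scope.

(* Right R-modules are modelled as left modules over the converse ring
   R^c = GRing.converse R (so that m *: (a * b) = (m *: a) *: b in the right-module reading). *)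
Notation rmodType R := (lmodType (GRing.converse R)).

Section ModuleNotions.
Variables (K : pzRingType).

Definition submodule (V : lmodType K) (S : V -> Prop) : Prop :=
  [/\ S 0, (forall x y, S x -> S y -> S (x + y)) & (forall (a : K) x, S x -> S (a *: x))].

Definition direct_summand (V : lmodType K) (S : V -> Prop) : Prop :=
  submodule S /\
  exists T : V -> Prop,
    [/\ submodule T,
        (forall x, S x -> T x -> x = 0) &
        (forall x, exists y z, [/\ S y, T z & x = y + z])].

Definition kerp (V W : lmodType K) (f : V -> W) : V -> Prop := fun x => f x = 0.

Definition Rickart (M : lmodType K) : Prop :=
  forall phi : {linear M -> M}, direct_summand (kerp phi).

Definition dsum_pow (M : lmodType K) (n : nat) : lmodType K := {ffun 'I_n -> M}.

Definition fin_Sigma_Rickart (M : lmodType K) : Prop :=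
  forall n : nat, (0 < n)%N -> Rickart (dsum_pow M n).

Definition simple_module (P : lmodType K) : Prop :=
  (exists x : P, x <> 0) /\
  forall S : P -> Prop, submodule S -> (forall x, S x -> x = 0) \/ (forall x, S x).

Definition Hom_zero (M P : lmodType K) : Prop :=
  forall f : {linear M -> P}, forall x, f x = 0.

End ModuleNotions.

From HB Require Import structures.
From mathcomp Require Import all_boot all_algebra.
From mathcomp Require Import boolp.
Set Implicit Arguments. Unset Strict Implicit. Unset Printing Implicit Defensive.
Import GRing.Theory.
Local Open Scope ring_scope.

(* The heart of the proof is a criterion for internal direct sums W = U (+) V
   (Rickart_direct_sum): if U is Rickart, V is semisimple and Hom(U, V) = 0, then W
   is Rickart.  Indeed an endomorphism phi of W is upper triangular
   [alpha beta; 0 delta], so ker phi = {(u, v) | delta v = 0, alpha u + beta v = 0};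
   if C complements ker alpha in U and Q' complements
   Q = {v | delta v = 0, beta v in im alpha} in V, then C (+) Q' complements ker phi.

   The theorem follows by applying the criterion to
   (M^(l) (+) P^(n))^(k) = (M^(l))^(k) (+) (P^(n))^(k), using that
   - Rickart and semisimple modules are invariant under isomorphism, and
     (X^(l))^(k) is isomorphic to X^(kl), so (M^(l))^(k) is Rickart;
   - a finite direct sum of copies of a simple module is semisimple
     (a maximal coordinate submodule meeting a given submodule trivially
     is a complement of it);
   - Hom(X, Y) = 0 implies Hom(X^(I), Y^(J)) = 0. *)

Section Submodules.
Variable K : pzRingType.

Definition sum_pred (V : lmodType K) (S T : V -> Prop) (x : V) : Prop :=
  exists y z, [/\ S y, T z & x = y + z].

Definition is_complement (V : lmodType K) (S T : V -> Prop) : Prop :=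
  [/\ submodule T, (forall x, S x -> T x -> x = 0) & (forall x, sum_pred S T x)].

Definition semisimple (V : lmodType K) : Prop :=
  forall S : V -> Prop, submodule S -> direct_summand S.

Lemma is_complement_ext (V : lmodType K) (S S' T : V -> Prop) :
  (forall x, S x <-> S' x) -> is_complement S T -> is_complement S' T.
Proof.
move=> SS' [subT ST0 STV]; split=> // [x /SS'|x]; first exact: ST0.
by have [y [z [/SS' Sy Tz ->]]] := STV x; exists y, z.
Qed.

Lemma submodule_ker (U V : lmodType K) (f : {linear U -> V}) : submodule (kerp f).
Proof.
rewrite /kerp; split=> [|x y fx fy|a x fx]; first exact: linear0.
  by rewrite linearD fx fy addr0.
by rewrite linearZ_LR fx scaler0.
Qed.

Lemma submodule_preim (U V : lmodType K) (f : {linear U -> V}) (S : V -> Prop) :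
  submodule S -> submodule (fun x => S (f x)).
Proof.
case=> S0 SD SZ; split=> [|x y Sx Sy|a x Sx]; first by rewrite linear0.
  by rewrite linearD; apply: SD.
by rewrite linearZ_LR; apply: SZ.
Qed.

Lemma submodule_sum_pred (V : lmodType K) (S T : V -> Prop) :
  submodule S -> submodule T -> submodule (sum_pred S T).
Proof.
case=> S0 SD SZ [T0 TD TZ]; split=> [|_ _ [y [z [Sy Tz ->]]] [y' [z' [Sy' Tz' ->]]]|].
- by exists 0, 0; rewrite addr0.
- by exists (y + y'), (z + z'); rewrite addrACA; split; [apply: SD | apply: TD |].
- move=> a _ [y [z [Sy Tz ->]]].
  by exists (a *: y), (a *: z); rewrite scalerDr; split; [apply: SZ | apply: TZ |].
Qed.

End Submodules.

Section IsomorphismInvariance.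
Variables (K : pzRingType) (X Y : lmodType K).
Variables (F : {linear X -> Y}) (G : {linear Y -> X}).
Hypotheses (FK : cancel F G) (GK : cancel G F).

Lemma is_complement_transport (S : X -> Prop) (T : Y -> Prop) :
  is_complement (fun y => S (G y)) T -> is_complement S (fun x => T (F x)).
Proof.
case=> subT ST0 STY; split=> [|x Sx TFx|x]; first exact: submodule_preim.
  by rewrite -[x]FK (ST0 (F x)) ?linear0 ?FK.
have [y [z [Sy Tz eFx]]] := STY (F x).
by exists (G y), (G z); rewrite GK -linearD -eFx FK.
Qed.

Lemma semisimple_iso : semisimple Y -> semisimple X.
Proof.
move=> ssY S subS; split=> //.
have [_ [T compT]] := ssY _ (submodule_preim G subS).
by exists (fun x => T (F x)); apply: is_complement_transport.
Qed.

Lemma Rickart_iso : Rickart Y -> Rickart X.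
Proof.
move=> RY f; split; first exact: submodule_ker.
have [_ [T compT]] := RY (F \o f \o G).
exists (fun x => T (F x)); apply: is_complement_transport.
apply: is_complement_ext compT => y; rewrite /kerp /=.
by split=> [|->]; [move/(congr1 G); rewrite FK linear0 | rewrite linear0].
Qed.

End IsomorphismInvariance.

Section DirectSumCriterion.
Variables (K : pzRingType) (U V W : lmodType K).
Variables (iU : {linear U -> W}) (pU : {linear W -> U}).
Variables (iV : {linear V -> W}) (pV : {linear W -> V}).
Hypotheses (iUK : cancel iU pU) (iVK : cancel iV pV).
Hypotheses (pUiV : forall v, pU (iV v) = 0) (pViU : forall u, pV (iU u) = 0).
Hypothesis iUpU_iVpV : forall w, iU (pU w) + iV (pV w) = w.
Hypothesis homUV0 : Hom_zero U V.

Section Endomorphism.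
Variable phi : {linear W -> W}.

(* Since Hom(U, V) = 0, phi has an upper-triangular matrix [alpha beta; 0 delta]. *)
Let alpha : {linear U -> U} := pU \o phi \o iU.
Let beta : {linear V -> U} := pU \o phi \o iV.
Let delta : {linear V -> V} := pV \o phi \o iV.

Lemma endo_triangular w :
  phi w = iU (alpha (pU w) + beta (pV w)) + iV (delta (pV w)).
Proof.
have gamma0 u : pV (phi (iU u)) = 0 by exact: (homUV0 (pV \o phi \o iU)).
rewrite -{1}[w]iUpU_iVpV linearD -{1}[phi (iU _)]iUpU_iVpV gamma0 linear0 addr0.
by rewrite -{1}[phi (iV _)]iUpU_iVpV addrA -linearD.
Qed.

Lemma ker_endo w :
  phi w = 0 <-> alpha (pU w) + beta (pV w) = 0 /\ delta (pV w) = 0.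
Proof.
rewrite endo_triangular; split=> [phiw0|[-> ->]]; last by rewrite !linear0 addr0.
split; first by have := congr1 pU phiw0; rewrite linearD iUK pUiV addr0 linear0.
by have := congr1 pV phiw0; rewrite linearD iVK pViU add0r linear0.
Qed.

(* The components v in V of kernel vectors: delta v = 0 and beta v lies in the image of alpha. *)
Let Q (v : V) : Prop := delta v = 0 /\ exists u, alpha u + beta v = 0.

Lemma submodule_Q : submodule Q.
Proof.
split=> [|x y [dx [ux ex]] [dy [uy ey]]|a x [dx [ux ex]]].
- by split; [exact: linear0 | exists 0; rewrite !linear0 addr0].
- split; first by rewrite linearD dx dy addr0.
  by exists (ux + uy); rewrite !linearD addrACA ex ey addr0.
- split; first by rewrite linearZ_LR dx scaler0.
  by exists (a *: ux); rewrite !linearZ_LR -scalerDr ex scaler0.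
Qed.

Lemma ker_endo_summand : Rickart U -> semisimple V -> direct_summand (kerp phi).
Proof.
move=> RU ssV; split; first exact: submodule_ker.
have [_ [C [[C0 CD CZ] kerC0 kerCU]]] := RU alpha.
have [_ [Q' [[Q'0 Q'D Q'Z] QQ'0 QQ'V]]] := ssV _ submodule_Q.
exists (fun w => C (pU w) /\ Q' (pV w)); split.
- split=> [|x y [? ?] [? ?]|a x [? ?]]; rewrite ?linear0 ?linearD ?linearZ_LR.
  + by [].
  + by split; [apply: CD | apply: Q'D].
  + by split; [apply: CZ | apply: Q'Z].
- move=> w /ker_endo[kerU kerV] [Cw Q'w].
  have pVw0 : pV w = 0 by apply: QQ'0 => //; split => //; exists (pU w).
  have pUw0 : pU w = 0 by apply: kerC0 => //; rewrite /kerp -kerU pVw0 linear0 addr0.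
  by rewrite -[w]iUpU_iVpV pUw0 pVw0 !linear0 addr0.
- move=> w; have [q [q' [[dq [u equ]] Q'q' epVw]]] := QQ'V (pV w).
  have [k [c [/= alk0 Cc eu]]] := kerCU u.
  have [k' [c' [/= alk'0 Cc' epUw]]] := kerCU (pU w).
  pose y := iU (c + k') + iV q.
  have eUy : pU y = c + k' by rewrite /y linearD iUK pUiV addr0.
  have eVy : pV y = q by rewrite /y linearD iVK pViU add0r.
  exists y, (w - y); split.
  + apply/ker_endo; rewrite eUy eVy !linearD (alk'0 : alpha k' = 0) addr0 -equ eu.
    by rewrite linearD (alk0 : alpha k = 0) add0r.
  + rewrite (linearB pU) (linearB pV) eUy eVy epUw epVw; split; last by rewrite addrC addKr.
    have -> : k' + c' - (c + k') = c' + (-1) *: c.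
      by rewrite scaleN1r [c + k']addrC opprD addrACA subrr add0r.
    by apply: CD => //; apply: CZ.
  + by rewrite addrC subrK.
Qed.

End Endomorphism.

Lemma Rickart_direct_sum : Rickart U -> semisimple V -> Rickart W.
Proof. by move=> RU ssV phi; apply: ker_endo_summand. Qed.

End DirectSumCriterion.

Section FiniteDirectSums.
Variables (K : pzRingType) (I : finType) (X : lmodType K).

Definition ffun_single (i : I) (x : X) : {ffun I -> X} :=
  [ffun j => if j == i then x else 0].
Definition ffun_proj (i : I) (x : {ffun I -> X}) : X := x i.

Fact ffun_single_linear i : linear (ffun_single i).
Proof.
move=> a x y; apply/ffunP => j; rewrite !ffunE.
by case: (j == i); rewrite ?scaler0 ?addr0.
Qed.
HB.instance Definition _ i :=
  GRing.isLinear.Build K X {ffun I -> X} *:%R (ffun_single i) (ffun_single_linear i).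

Fact ffun_proj_linear i : linear (ffun_proj i).
Proof. by move=> a x y; rewrite /ffun_proj !ffunE. Qed.
HB.instance Definition _ i :=
  GRing.isLinear.Build K {ffun I -> X} X *:%R (ffun_proj i) (ffun_proj_linear i).

Lemma sum_ffun_single (x : {ffun I -> X}) : x = \sum_i ffun_single i (x i).
Proof.
apply/ffunP => j; rewrite sum_ffunE (bigD1 j) //= ffunE eqxx big1 ?addr0 //.
by move=> i /negbTE neij; rewrite ffunE eq_sym neij.
Qed.

Lemma submodule_singles_full (S : {ffun I -> X} -> Prop) :
  submodule S -> (forall i x, S (ffun_single i x)) -> forall x, S x.
Proof.
case=> S0 SD _ Ssingle x; rewrite [x]sum_ffun_single.
by apply: (big_ind S) => // i _; apply: Ssingle.
Qed.

End FiniteDirectSums.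

Lemma Hom_zero_ffun (K : pzRingType) (I J : finType) (X Y : lmodType K) :
  Hom_zero X Y -> Hom_zero {ffun I -> X} {ffun J -> Y}.
Proof.
move=> homXY0 g x; rewrite [x]sum_ffun_single linear_sum; apply: big1 => i _.
by apply/ffunP => j; rewrite ffunE; exact: (homXY0 (ffun_proj j \o g \o ffun_single i)).
Qed.

Section SemisimpleFfun.
Variables (K : pzRingType) (I : finType) (P : lmodType K).
Hypothesis simpleP : simple_module P.

Definition supported (J : {set I}) (x : {ffun I -> P}) : Prop :=
  forall i, i \notin J -> x i = 0.

Lemma submodule_supported J : submodule (supported J).
Proof.
split=> [i _|x y sx sy i iJ|a x sx i iJ]; rewrite ffunE //.
  by rewrite sx // sy // addr0.
by rewrite sx // scaler0.
Qed.

Variable Q : {ffun I -> P} -> Prop.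
Hypothesis subQ : submodule Q.

Definition Q_independent (J : {set I}) : Prop :=
  forall x, Q x -> supported J x -> x = 0.

(* For J maximal among Q-independent sets, every coordinate vector lies in Q + P^(J):
   otherwise the coordinate i would give a nonzero proper submodule of the simple P. *)
Lemma single_in_sum J :
  Q_independent J -> (forall i, i \notin J -> ~ Q_independent (i |: J)) ->
  forall i p, sum_pred Q (supported J) (ffun_single i p).
Proof.
move=> indJ maxJ i p; have [iJ|iNJ] := boolP (i \in J).
  exists 0, (ffun_single i p); rewrite add0r; split=> // [|j jNJ]; first by case: subQ.
  by rewrite ffunE; case: eqP => // eji; rewrite eji iJ in jNJ.
have [x [Qx supx x_neq0]] : exists x, [/\ Q x, supported (i |: J) x & x <> 0].
  apply: contrapT => noX; apply: (maxJ i iNJ) => x Qx supx.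
  by apply: contrapT => x_neq0; apply: noX; exists x.
pose S (q : P) := sum_pred Q (supported J) (ffun_single i q).
have subS : submodule S.
  exact/(submodule_preim (ffun_single i))/submodule_sum_pred/submodule_supported.
have Sxi : S (x i).
  exists x, (ffun_single i (x i) - x); split=> //; last by rewrite addrC subrK.
  move=> j jNJ; rewrite !ffunE; case: eqP => [->|/eqP neji]; first by rewrite subrr.
  by rewrite supx ?subr0 ?oppr0 // in_setU1 negb_or neji.
have [S0|Sfull] := simpleP.2 S subS; last exact: Sfull.
case: x_neq0; apply: indJ => // j jNJ.
have [->|neji] := eqVneq j i; first exact: S0.
by apply: supx; rewrite in_setU1 negb_or neji.
Qed.

(* A maximal Q-independent J exists, and then P^(J) is a complement of Q. *)
Lemma complement_supported : exists J, is_complement Q (supported J).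
Proof.
have indep0 : `[< Q_independent set0 >].
  by apply/asboolP => x _ supx; apply/ffunP => i; rewrite ffunE supx ?in_set0.
have [J /maxsetP[/asboolP indJ maxJ] _] :=
  @maxset_exists _ (fun J => `[< Q_independent J >]) set0 indep0.
exists J; split; [exact: submodule_supported | exact: indJ |].
apply: submodule_singles_full.
  exact/submodule_sum_pred/submodule_supported.
apply: single_in_sum => // i iNJ indiJ.
by move: iNJ; rewrite -(maxJ (i |: J)) ?subsetUr //; [rewrite setU11 | apply/asboolP].
Qed.

End SemisimpleFfun.

Lemma semisimple_ffun (K : pzRingType) (I : finType) (P : lmodType K) :
  simple_module P -> semisimple {ffun I -> P}.
Proof.
move=> simpleP Q subQ; split=> //.
by have [J compJ] := complement_supported simpleP subQ; exists (supported J).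
Qed.

Section Reindexing.
Variables (K : pzRingType) (X : lmodType K).

Section Curry.
Variables I J : finType.

Definition ffun_curry (x : {ffun I * J -> X}) : {ffun I -> {ffun J -> X}} :=
  [ffun i => [ffun j => x (i, j)]].
Definition ffun_uncurry (y : {ffun I -> {ffun J -> X}}) : {ffun I * J -> X} :=
  [ffun p => y p.1 p.2].

Fact ffun_curry_linear : linear ffun_curry.
Proof. by move=> a x y; apply/ffunP => i; apply/ffunP => j; rewrite !ffunE. Qed.
HB.instance Definition _ := GRing.isLinear.Build K _ _ *:%R ffun_curry ffun_curry_linear.

Fact ffun_uncurry_linear : linear ffun_uncurry.
Proof. by move=> a x y; apply/ffunP => p; rewrite !ffunE. Qed.
HB.instance Definition _ := GRing.isLinear.Build K _ _ *:%R ffun_uncurry ffun_uncurry_linear.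

Lemma ffun_curryK : cancel ffun_curry ffun_uncurry.
Proof. by move=> x; apply/ffunP => -[i j]; rewrite !ffunE. Qed.

Lemma ffun_uncurryK : cancel ffun_uncurry ffun_curry.
Proof. by move=> y; apply/ffunP => i; apply/ffunP => j; rewrite !ffunE. Qed.

Lemma Rickart_curry : Rickart {ffun I * J -> X} -> Rickart {ffun I -> {ffun J -> X}}.
Proof. exact: (Rickart_iso ffun_uncurryK ffun_curryK). Qed.

Lemma semisimple_curry :
  semisimple {ffun I * J -> X} -> semisimple {ffun I -> {ffun J -> X}}.
Proof. exact: (semisimple_iso ffun_uncurryK ffun_curryK). Qed.

End Curry.

Section Reindex.
Variables (I J : finType) (h : I -> J) (h' : J -> I).
Hypotheses (hK : cancel h h') (h'K : cancel h' h).

Definition ffun_reindex (x : {ffun J -> X}) : {ffun I -> X} := [ffun i => x (h i)].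
Definition ffun_unreindex (y : {ffun I -> X}) : {ffun J -> X} := [ffun j => y (h' j)].

Fact ffun_reindex_linear : linear ffun_reindex.
Proof. by move=> a x y; apply/ffunP => i; rewrite !ffunE. Qed.
HB.instance Definition _ := GRing.isLinear.Build K _ _ *:%R ffun_reindex ffun_reindex_linear.

Fact ffun_unreindex_linear : linear ffun_unreindex.
Proof. by move=> a x y; apply/ffunP => j; rewrite !ffunE. Qed.
HB.instance Definition _ :=
  GRing.isLinear.Build K _ _ *:%R ffun_unreindex ffun_unreindex_linear.

Lemma ffun_reindexK : cancel ffun_reindex ffun_unreindex.
Proof. by move=> x; apply/ffunP => j; rewrite !ffunE h'K. Qed.

Lemma ffun_unreindexK : cancel ffun_unreindex ffun_reindex.
Proof. by move=> y; apply/ffunP => i; rewrite !ffunE hK. Qed.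

End Reindex.

Lemma Rickart_reindex (I J : finType) :
  #|I| = #|J| -> Rickart {ffun J -> X} -> Rickart {ffun I -> X}.
Proof.
move=> cardIJ; pose h i := enum_val (cast_ord cardIJ (enum_rank i)).
pose h' j := enum_val (cast_ord (esym cardIJ) (enum_rank j)).
have hK : cancel h h' by move=> i; rewrite /h /h' enum_valK cast_ordK enum_rankK.
have h'K : cancel h' h by move=> j; rewrite /h /h' enum_valK cast_ordKV enum_rankK.
exact: (Rickart_iso (ffun_unreindexK hK) (ffun_reindexK h'K)).
Qed.

Lemma Rickart_dsum_pow_pow (k l : nat) :
  Rickart (dsum_pow X (k * l)) -> Rickart (dsum_pow (dsum_pow X l) k).
Proof.
move=> RXkl; apply: Rickart_curry; apply: Rickart_reindex RXkl.
by rewrite card_prod !card_ord.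
Qed.

End Reindexing.

Section ProductDecomposition.
Variables (K : pzRingType) (I : finType) (A B : lmodType K).

Definition ffun_inl (u : {ffun I -> A}) : {ffun I -> A * B} := [ffun i => (u i, 0)].
Definition ffun_inr (v : {ffun I -> B}) : {ffun I -> A * B} := [ffun i => (0, v i)].
Definition ffun_fst (w : {ffun I -> A * B}) : {ffun I -> A} := [ffun i => (w i).1].
Definition ffun_snd (w : {ffun I -> A * B}) : {ffun I -> B} := [ffun i => (w i).2].

Fact ffun_inl_linear : linear ffun_inl.
Proof.
move=> a x y; apply/ffunP => i; rewrite !ffunE.
by apply: injective_projections; rewrite /= ?ffunE ?scaler0 ?addr0.
Qed.
HB.instance Definition _ := GRing.isLinear.Build K _ _ *:%R ffun_inl ffun_inl_linear.

Fact ffun_inr_linear : linear ffun_inr.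
Proof.
move=> a x y; apply/ffunP => i; rewrite !ffunE.
by apply: injective_projections; rewrite /= ?ffunE ?scaler0 ?addr0.
Qed.
HB.instance Definition _ := GRing.isLinear.Build K _ _ *:%R ffun_inr ffun_inr_linear.

Fact ffun_fst_linear : linear ffun_fst.
Proof. by move=> a x y; apply/ffunP => i; rewrite !ffunE. Qed.
HB.instance Definition _ := GRing.isLinear.Build K _ _ *:%R ffun_fst ffun_fst_linear.

Fact ffun_snd_linear : linear ffun_snd.
Proof. by move=> a x y; apply/ffunP => i; rewrite !ffunE. Qed.
HB.instance Definition _ := GRing.isLinear.Build K _ _ *:%R ffun_snd ffun_snd_linear.

Lemma Rickart_ffun_prod :
  Rickart {ffun I -> A} -> semisimple {ffun I -> B} ->
  Hom_zero {ffun I -> A} {ffun I -> B} -> Rickart {ffun I -> A * B}.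
Proof.
move=> RA ssB homAB0.
apply: (Rickart_direct_sum (iU := ffun_inl) (pU := ffun_fst) (iV := ffun_inr) (pV := ffun_snd)) => //.
- by move=> u; apply/ffunP => i; rewrite !ffunE.
- by move=> v; apply/ffunP => i; rewrite !ffunE.
- by move=> v; apply/ffunP => i; rewrite !ffunE.
- by move=> u; apply/ffunP => i; rewrite !ffunE.
- move=> w; apply/ffunP => i; rewrite !ffunE.
  by apply: injective_projections; rewrite /= ?ffunE ?addr0 ?add0r.
Qed.

End ProductDecomposition.

Theorem mainTheorem18 (R : pzRingType) (M P : rmodType R) :
  fin_Sigma_Rickart M -> simple_module P -> Hom_zero M P ->
  forall l n : nat, (0 < l)%N -> (0 < n)%N ->
    fin_Sigma_Rickart ((dsum_pow M l * dsum_pow P n)%type : lmodType (GRing.converse R)).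
Proof.
move=> RM simpleP homMP0 l n l_gt0 _ k k_gt0.
apply: Rickart_ffun_prod.
- by apply/Rickart_dsum_pow_pow/RM; rewrite muln_gt0 k_gt0 l_gt0.
- exact/semisimple_curry/semisimple_ffun.
- exact/Hom_zero_ffun/Hom_zero_ffun.
Qed.
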